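(* For every $x\in\mathbb{X}$, with $x^+=f(x,\kappa(x))$, one has $V(x^+)\le V(x)-l(x,\kappa(x))$.
   Context: Consider the discrete-time controlled system $x^+=f(x,u)$ with state $x\in\mathbb{R}^{n}$ and control $u\in\mathbb{R}^{m}$, constraint sets $\mathbb{X}\subset\mathbb{R}^n$, $\mathbb{U}\subset\mathbb{R}^m$, $\mathbb{Y}\subset\mathbb{R}^p$, and a constraint function $h(x,u)\in\mathbb{R}^p$. A control $u$ is feasible at $x\in\mathbb{X}$ if $u\in\mathbb{U}$, $f(x,u)\in\mathbb{X}$ and $h(x,u)\in\mathbb{Y}$. A control sequence $(u(0),\ldots,u(N-1))$ is feasible from $x$ if, for the state sequence defined by $x(0)=x$ and $x(k+1)=f(x(k),u(k))$, each $u(k)$ is feasible at $x(k)$. We are given a stage cost $l(x,u)$, a terminal set $\mathbb{X}_f$ and a terminal cost $V_f$ defined on $\mathbb{X}_f$. Horizon-$N$ problem at $x$: minimize $\sum_{k=0}^{N-1}l(x(k),u(k))+V_f(x(N))$ over control sequences that are feasible from $x$ and satisfy $x(N)\in\mathbb{X}_f$. Let $V_N^0(x)$ be its minimum value, which is assumed to be attained whenever the feasible set is nonempty. Let $(u^0_N(0),\ldots,u^0_N(N-1))$ be a minimizer, and set $\kappa_N(x)=u_N^0(0)$. For $N=0$, $V_0^0(x)=V_f(x)$ for $x\in\mathbb{X}_f$. Standing assumptions: (A1) $f,l,h,V_f$ are continuous on an open set containing $\mathbb{X}\times\mathbb{U}$ (for $V_f$, an open set containing $\mathbb{X}_f$).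 The stage cost $l$ is nonnegative definite in $(x,u)$ and positive definite in $u$. $V_f$ is positive definite on $\mathbb{X}_f$. Moreover $f(0,0)=0$, $l(0,0)=0$ and $V_f(0)=0$. (A2) $\mathbb{X}$ and $\mathbb{X}_f$ are closed, $\mathbb{X}_f\subset\mathbb{X}$, $\mathbb{U}$ is compact, and $\mathbb{X},\mathbb{X}_f,\mathbb{U}$ each contain a neighborhood of the origin. (A3) For every $x\in\mathbb{X}_f$ there is a control $u$ feasible at $x$ with $f(x,u)\in\mathbb{X}_f$ and $l(x,u)+V_f(f(x,u))\le V_f(x)$. (A4) For every $x\in\mathbb{X}$ there exist an integer $N\ge0$ and a feasible control sequence of length $N$ from $x$ whose state sequence satisfies $x(N)\in\mathbb{X}_f$. For $x\in\mathbb{X}$, $N(x)$ denotes the minimum such $N$. (A5) There is an integer $M\ge 0$ with $N(x)\le M$ for all $x\in\mathbb{X}$. Define $V(x)=V^0_{N(x)}(x)$ for $x\in\mathbb{X}$. For $N(x)\ge1$ set $\kappa(x)=\kappa_{N(x)}(x)$. For $N(x)=0$ (equivalently $x\in\mathbb{X}_f$), let $\kappa(x)$ be a feasible control $u$ as in (A3). *)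

From HB Require Import structures.
From mathcomp Require Import all_boot all_order all_algebra.
From mathcomp Require Import all_classical all_reals all_analysis.
Set Implicit Arguments. Unset Strict Implicit. Unset Printing Implicit Defensive.
Import Order.TTheory GRing.Theory Num.Theory.
Import numFieldNormedType.Exports.
Local Open Scope classical_set_scope.
Local Open Scope ring_scope.

Section MPC.
Variables (R : realType) (n m p : nat).
Variable f : 'rV[R]_n -> 'rV[R]_m -> 'rV[R]_n.
Variable h : 'rV[R]_n -> 'rV[R]_m -> 'rV[R]_p.
Variables (X : set 'rV[R]_n) (U : set 'rV[R]_m) (Y : set 'rV[R]_p).
Variable l : 'rV[R]_n -> 'rV[R]_m -> R.
Variable Xf : set 'rV[R]_n.
Variable Vf : 'rV[R]_n -> R.

Definition feasible_at (x : 'rV[R]_n) (u : 'rV[R]_m) : Prop :=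
  U u /\ X (f x u) /\ Y (h x u).

Fixpoint traj (x : 'rV[R]_n) (u : nat -> 'rV[R]_m) (k : nat) : 'rV[R]_n :=
  match k with
  | 0 => x
  | k'.+1 => f (traj x u k') (u k')
  end.

(* (u(0),...,u(N-1)) is feasible from x (values u k, k >= N, are irrelevant) *)
Definition feasible_seq (N : nat) (x : 'rV[R]_n) (u : nat -> 'rV[R]_m) : Prop :=
  forall k, (k < N)%N -> feasible_at (traj x u k) (u k).

Definition admissible (N : nat) (x : 'rV[R]_n) (u : nat -> 'rV[R]_m) : Prop :=
  feasible_seq N x u /\ Xf (traj x u N).

Definition cost (N : nat) (x : 'rV[R]_n) (u : nat -> 'rV[R]_m) : R :=
  \sum_(k < N) l (traj x u k) (u k) + Vf (traj x u N).

Definition VN0 (N : nat) (x : 'rV[R]_n) : R :=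
  inf [set cost N x u | u in admissible N x].

Definition is_minimizer (N : nat) (x : 'rV[R]_n) (u : nat -> 'rV[R]_m) : Prop :=
  admissible N x u /\ forall v, admissible N x v -> cost N x u <= cost N x v.

End MPC.

From HB Require Import structures.
From mathcomp Require Import all_boot all_order all_algebra.
From mathcomp Require Import all_classical all_reals all_analysis.
Import Order.TTheory GRing.Theory Num.Theory.
Import numFieldNormedType.Exports.
Local Open Scope classical_set_scope.
Local Open Scope ring_scope.

(* If [u] is optimal for the horizon-[N+1] problem at [x]
   with [N+1 = N(x)] minimal, its tail is admissible for the horizon-[N] problem
   at [x+], and [N] is the minimal horizon there (a shorter one could be
   prefixed by [u 0]).  Hence [V(x+) <= cost of the tail = V(x) - l(x, u 0)].
   When [N(x) = 0], [x] and [x+] lie in [Xf], where [V = Vf], and (A3) is the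
   claim. *)

Section OptimalControl.
Set Implicit Arguments.
Variables (R : realType) (n m p : nat).
Variable f : 'rV[R]_n -> 'rV[R]_m -> 'rV[R]_n.
Variable h : 'rV[R]_n -> 'rV[R]_m -> 'rV[R]_p.
Variables (X : set 'rV[R]_n) (U : set 'rV[R]_m) (Y : set 'rV[R]_p).
Variable l : 'rV[R]_n -> 'rV[R]_m -> R.
Variables (Xf : set 'rV[R]_n) (Vf : 'rV[R]_n -> R).

Local Notation traj := (traj f).
Local Notation admissible := (admissible f h X U Y Xf).
Local Notation cost := (cost f l Vf).
Local Notation VN0 := (VN0 f h X U Y l Xf Vf).
Local Notation is_minimizer := (is_minimizer f h X U Y l Xf Vf).

Definition tail (u : nat -> 'rV[R]_m) k := u k.+1.

Definition cons_ctrl (u0 : 'rV[R]_m) (u : nat -> 'rV[R]_m) k :=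
  if k is k'.+1 then u k' else u0.

Definition min_horizon (N : nat) (x : 'rV[R]_n) :=
  (exists u, admissible N x u) /\ forall N' u, admissible N' x u -> (N <= N')%N.

Lemma traj_tail x u k : traj (f x (u 0%N)) (tail u) k = traj x u k.+1.
Proof. by elim: k => //= k ->. Qed.

Lemma cost_succ N x u : cost N.+1 x u = l x (u 0%N) + cost N (f x (u 0%N)) (tail u).
Proof.
rewrite /cost big_ord_recl /= traj_tail addrA; congr (_ + _ + _).
by apply: eq_bigr => i _; rewrite traj_tail.
Qed.

Lemma cost0 x u : cost 0 x u = Vf x.
Proof. by rewrite /cost big_ord0 add0r. Qed.

Lemma admissible_succ N x u :
  admissible N.+1 x u <->
  feasible_at f h X U Y x (u 0%N) /\ admissible N (f x (u 0%N)) (tail u).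
Proof.
rewrite /admissible /feasible_seq -traj_tail; split.
  move=> [hs hf]; split; first exact: (hs 0%N).
  by split=> // k hk; rewrite traj_tail; apply: hs.
move=> [h0 [hs hf]]; split=> // -[|k] hk //.
by rewrite -traj_tail; apply: hs.
Qed.

Lemma admissible0 x u : admissible 0 x u <-> Xf x.
Proof. by split=> [[] | Xfx]. Qed.

Lemma min_horizon_unique N N' x : min_horizon N x -> min_horizon N' x -> N = N'.
Proof.
move=> [[u hu] hN] [[u' hu'] hN'].
by apply/eqP; rewrite eqn_leq (hN _ _ hu') (hN' _ _ hu).
Qed.

Lemma min_horizon0 x : Xf x -> min_horizon 0 x.
Proof. by move=> Xfx; split=> [|N u _] //; exists (fun=> 0). Qed.

Lemma min_horizon_tail N x u :
  min_horizon N.+1 x -> admissible N.+1 x u -> min_horizon N (f x (u 0%N)).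
Proof.
move=> [_ hmin] /admissible_succ [fe adm]; split; first by exists (tail u).
move=> N' w hw; rewrite -ltnS; apply: (hmin _ (cons_ctrl (u 0%N) w)).
exact/admissible_succ.
Qed.

Lemma VN0_minimizer N x u : is_minimizer N x u -> VN0 N x = cost N x u.
Proof.
move=> [hu hm]; apply/eqP; rewrite eq_le; apply/andP; split.
  apply: ge_inf; last by exists u.
  by exists (cost N x u) => _ [v hv <-]; exact: hm.
apply: lb_le_inf; first by exists (cost N x u), u.
by move=> _ [v hv <-]; exact: hm.
Qed.

Lemma VN0_le_cost N x v :
  (exists u, is_minimizer N x u) -> admissible N x v -> VN0 N x <= cost N x v.
Proof. by move=> [u hu] hv; rewrite (VN0_minimizer hu); apply: hu.2. Qed.

Lemma VN0_on_Xf x : Xf x -> VN0 0 x = Vf x.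
Proof.
move=> Xfx; rewrite (@VN0_minimizer 0 x (fun=> 0)) ?cost0 //.
by split=> [|v _]; rewrite ?cost0.
Qed.

Lemma VN0_optimal_step N x u :
  is_minimizer N.+1 x u -> (exists w, is_minimizer N (f x (u 0%N)) w) ->
  VN0 N (f x (u 0%N)) <= VN0 N.+1 x - l x (u 0%N).
Proof.
move=> hu hattain; have /admissible_succ[_ adm_tail] := hu.1.
rewrite (VN0_minimizer hu) cost_succ addrAC subrr add0r.
exact: VN0_le_cost.
Qed.

End OptimalControl.

Arguments tail {R m} u k.
Arguments cons_ctrl {R m} u0 u k.
Arguments min_horizon {R n m p} f h X U Y Xf N x.

Theorem lemma2 (R : realType) (n m p : nat)
  (f : 'rV[R]_n -> 'rV[R]_m -> 'rV[R]_n)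
  (h : 'rV[R]_n -> 'rV[R]_m -> 'rV[R]_p)
  (X : set 'rV[R]_n) (U : set 'rV[R]_m) (Y : set 'rV[R]_p)
  (l : 'rV[R]_n -> 'rV[R]_m -> R)
  (Xf : set 'rV[R]_n) (Vf : 'rV[R]_n -> R)
  (Nx : 'rV[R]_n -> nat)
  (kappa : 'rV[R]_n -> 'rV[R]_m)
  (* (A1) *)
  (hcont : exists O : set ('rV[R]_n * 'rV[R]_m),
      [/\ open O, X `*` U `<=` O,
          {in O, continuous (fun z => f z.1 z.2)},
          {in O, continuous (fun z => l z.1 z.2)} &
          {in O, continuous (fun z => h z.1 z.2)}])
  (hVfcont : exists O : set 'rV[R]_n, [/\ open O, Xf `<=` O & {in O, continuous Vf}])
  (hl_nonneg : forall x u, 0 <= l x u)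
  (hl_posu : forall x u, u != 0 -> 0 < l x u)
  (hVf_pos : forall x, Xf x -> x != 0 -> 0 < Vf x)
  (hf0 : f 0 0 = 0) (hl0 : l 0 0 = 0) (hVf0 : Vf 0 = 0)
  (* (A2) *)
  (hXcl : closed X) (hXfcl : closed Xf) (hXfX : Xf `<=` X) (hUcp : compact U)
  (hXn : nbhs (0 : 'rV[R]_n) X) (hXfn : nbhs (0 : 'rV[R]_n) Xf)
  (hUn : nbhs (0 : 'rV[R]_m) U)
  (* (A3) *)
  (hA3 : forall x, Xf x -> exists u, [/\ feasible_at f h X U Y x u, Xf (f x u) &
            l x u + Vf (f x u) <= Vf x])
  (* (A4) and the definition of N(x) as the minimal such horizon *)
  (hA4 : forall x, X x -> exists N u, admissible f h X U Y Xf N x u)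
  (hNx : forall x, X x ->
     (exists u, admissible f h X U Y Xf (Nx x) x u) /\
     (forall N u, admissible f h X U Y Xf N x u -> (Nx x <= N)%N))
  (* (A5) *)
  (hA5 : exists M : nat, forall x, X x -> (Nx x <= M)%N)
  (* minima of the horizon-N problems are attained *)
  (hattain : forall N x, (exists u, admissible f h X U Y Xf N x u) ->
     exists u, is_minimizer f h X U Y l Xf Vf N x u)
  (* definition of kappa *)
  (hkappa_pos : forall x, X x -> (0 < Nx x)%N ->
     exists u, is_minimizer f h X U Y l Xf Vf (Nx x) x u /\ kappa x = u 0%N)
  (hkappa_0 : forall x, X x -> Nx x = 0%N ->
     [/\ feasible_at f h X U Y x (kappa x), Xf (f x (kappa x)) &
         l x (kappa x) + Vf (f x (kappa x)) <= Vf x]) :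
  forall x, X x ->
    VN0 f h X U Y l Xf Vf (Nx (f x (kappa x))) (f x (kappa x))
      <= VN0 f h X U Y l Xf Vf (Nx x) x - l x (kappa x).
Proof.
move=> x Xx.
have Nx_min y : X y -> min_horizon f h X U Y Xf (Nx y) y := fun Xy => hNx y Xy.
have := Nx_min x Xx; case E: (Nx x) => [|N] Nx_min_x.
  have [[_ [Xx1 _]] Xfx1 decrease] := hkappa_0 x Xx E.
  have Xfx : Xf x by have [[u /admissible0]] := Nx_min_x.
  have -> : Nx (f x (kappa x)) = 0%N.
    by apply: min_horizon_unique (Nx_min _ Xx1) _; apply: min_horizon0.
  by rewrite !VN0_on_Xf // lerBrDr addrC.
have Nx_pos : (0 < Nx x)%N by rewrite E.
have [u [hu ->]] := hkappa_pos x Xx Nx_pos.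
rewrite E in hu; have /admissible_succ[[_ [Xx1 _]] adm_tail] := hu.1.
have -> : Nx (f x (u 0%N)) = N.
  exact: min_horizon_unique (Nx_min _ Xx1) (min_horizon_tail Nx_min_x hu.1).
by apply: VN0_optimal_step hu _; apply: hattain; exists (tail u).
Qed.
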